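(* The inclusion $\mathrm{CDUS}(\Pi)\subseteq\mathrm{PF}(\Pi)$ does not hold in general: there exists a (finite) family of policies $\Pi$ such that $\mathrm{CDUS}(\Pi)\not\subseteq\mathrm{PF}(\Pi)$.
   Context: A family of policies $\Pi=\{\pi_1,\pi_2,\dots\}$ of a multi-objective decision problem with $d$ objectives is given, each $\pi$ having a random return vector $\mathbf{Z}^\pi\in\mathbb{R}^d$ with finite mean $\mathbf{V}^\pi=\mathbb{E}[\mathbf{Z}^\pi]$; the return distributions of the policies may be arbitrary (e.g. finitely supported). For $\mathbf{x},\mathbf{y}\in\mathbb{R}^d$: $\mathbf{y}\preceq_p\mathbf{x}$ iff $y_i\le x_i$ for all $i$; $\mathbf{x}\succ_p\mathbf{y}$ iff $x_i\ge y_i$ for all $i$ and $x_i>y_i$ for some $i$. CDF: $F_{\mathbf{X}}(\mathbf{x})=P(\mathbf{X}\preceq_p\mathbf{x})$; $\mathbf{X}\succeq_{\mathrm{FSD}}\mathbf{Y}$ iff $F_{\mathbf{X}}\le F_{\mathbf{Y}}$ pointwise, $\succ_{\mathrm{FSD}}$ additionally requiring strict inequality somewhere; $\mathbf{X}\succ_d\mathbf{Y}$ iff $\mathbf{X}\succeq_{\mathrm{FSD}}\mathbf{Y}$ and $X_j\succ_{\mathrm{FSD}}Y_j$ for some marginal $j$. For weights $\lambda\in\Delta^{|\Pi|}$ (probability vectors), $\sum_i\lambda_i\mathbf{Z}^{\pi_i}$ is the mixture distribution with CDF $\sum_i\lambda_iF_{\mathbf{Z}^{\pi_i}}$. $\mathrm{PF}(\Pi)=\{\pi\in\Pi:\nexists\pi'\in\Pi,\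 \mathbf{V}^{\pi'}\succ_p\mathbf{V}^\pi\}$; $\mathrm{CDUS}(\Pi)=\{\pi\in\Pi:\nexists\lambda\in\Delta^{|\Pi|},\ \sum_i\lambda_i\mathbf{Z}^{\pi_i}\succ_d\mathbf{Z}^\pi\}$. *)

From mathcomp Require Import all_boot all_order all_algebra.
From mathcomp Require Import reals.
Set Implicit Arguments. Unset Strict Implicit. Unset Printing Implicit Defensive.
Import Order.TTheory GRing.Theory Num.Theory.
Local Open Scope ring_scope.

Section Defs.
Variables (R : realType) (d : nat).

(* A finitely supported return distribution on R^d: a list of
   (probability weight, atom) pairs. *)
Definition fdist := seq (R * 'rV[R]_d).

Definition is_dist (p : fdist) : Prop :=
  (forall wx, wx \in p -> 0 <= wx.1) /\ \sum_(wx <- p) wx.1 = 1.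

Definition mean (p : fdist) : 'rV[R]_d := \sum_(wx <- p) wx.1 *: wx.2.

Definition le_p (y x : 'rV[R]_d) : bool := [forall i, y 0 i <= x 0 i].

Definition succ_p (x y : 'rV[R]_d) : Prop :=
  (forall i, y 0 i <= x 0 i) /\ exists i, y 0 i < x 0 i.

Definition cdf (p : fdist) (x : 'rV[R]_d) : R :=
  \sum_(wx <- p | le_p wx.2 x) wx.1.

Definition mcdf (p : fdist) (j : 'I_d) (t : R) : R :=
  \sum_(wx <- p | wx.2 0 j <= t) wx.1.

Variable n : nat.

Definition in_simplex (lam : 'I_n -> R) : Prop :=
  (forall i, 0 <= lam i) /\ \sum_(i < n) lam i = 1.

Definition mix_cdf (lam : 'I_n -> R) (Pi : 'I_n -> fdist) (x : 'rV[R]_d) : R :=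
  \sum_(i < n) lam i * cdf (Pi i) x.
Definition mix_mcdf (lam : 'I_n -> R) (Pi : 'I_n -> fdist) (j : 'I_d) (t : R) : R :=
  \sum_(i < n) lam i * mcdf (Pi i) j t.

(* Distributional dominance  sum_i lam_i Z^{pi_i}  >_d  Z^pi :
   joint FSD (F_mix <= F_pi everywhere) and strict FSD of some marginal. *)
Definition mix_succ_d (lam : 'I_n -> R) (Pi : 'I_n -> fdist) (p : fdist) : Prop :=
  (forall x, mix_cdf lam Pi x <= cdf p x) /\
  exists j : 'I_d,
    (forall t, mix_mcdf lam Pi j t <= mcdf p j t) /\
    exists t, mix_mcdf lam Pi j t < mcdf p j t.

Definition inPF (Pi : 'I_n -> fdist) (k : 'I_n) : Prop :=
  ~ exists k' : 'I_n, succ_p (mean (Pi k')) (mean (Pi k)).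

Definition inCDUS (Pi : 'I_n -> fdist) (k : 'I_n) : Prop :=
  ~ exists lam : 'I_n -> R, in_simplex lam /\ mix_succ_d lam Pi (Pi k).

End Defs.

From mathcomp Require Import all_boot all_order all_algebra.
From mathcomp Require Import reals.
From mathcomp Require Import lra.
Set Implicit Arguments. Unset Strict Implicit. Unset Printing Implicit Defensive.
Import Order.TTheory GRing.Theory Num.Theory.
Local Open Scope ring_scope.

(* A fair coin between the returns 0 and 4 (mean 2) is Pareto dominated by
   the sure return 3.  It is nevertheless not distributionally dominated by
   any mixture of the two: the joint CDF at 3 is 1/2 for the coin and
   [lam_coin / 2 + lam_sure] for the mixture, so dominance forces
   [lam_sure = 0]; the mixture is then the coin itself, whose marginal CDF
   cannot be strictly below its own. *)

Section MixtureDominance.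
Variables (R : realType) (d n : nat).

Lemma simplex_eq1 (lam : 'I_n -> R) (k : 'I_n) :
  in_simplex lam -> (forall i, i != k -> lam i = 0) -> lam k = 1.
Proof.
move=> [_ sum_lam] lam0.
by rewrite -sum_lam (bigD1 k) //= big1 ?addr0 // => i /lam0.
Qed.

Lemma not_mix_succ_d_self (lam : 'I_n -> R) (Pi : 'I_n -> fdist R d) k :
  in_simplex lam -> (forall i, i != k -> lam i = 0) ->
  ~ mix_succ_d lam Pi (Pi k).
Proof.
move=> lamS lam0 [_ [j [_ [t]]]].
rewrite /mix_mcdf (bigD1 k) //= big1 => [|i /lam0 ->]; last by rewrite mul0r.
by rewrite (simplex_eq1 lamS lam0) mul1r addr0 ltxx.
Qed.

End MixtureDominance.

Section ConstantVectors.
Variables (R : realType) (d : nat).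

Lemma le_p_const (a b : R) :
  le_p (const_mx a : 'rV[R]_d.+1) (const_mx b) = (a <= b).
Proof.
apply/forallP/idP => [/(_ ord0)|le_ab i]; by rewrite !mxE.
Qed.

Lemma succ_p_const (a b : R) :
  a < b -> succ_p (const_mx b : 'rV[R]_d.+1) (const_mx a).
Proof.
move=> lt_ab; split=> [i|]; last exists ord0; rewrite !mxE //; exact: ltW.
Qed.

End ConstantVectors.

Section FiniteDistributions.
Variables (R : realType) (d : nat).

Lemma is_dist_dirac (x : 'rV[R]_d) : is_dist [:: (1, x)].
Proof.
split; last by rewrite big_seq1.
by move=> wx; rewrite inE => /eqP ->.
Qed.

Lemma is_dist_fair_coin (x y : 'rV[R]_d) : is_dist [:: (1 / 2, x); (1 / 2, y)].
Proof.
split; last by rewrite !big_cons big_nil /=; lra.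
by move=> wx; rewrite !inE => /orP[] /eqP -> /=; lra.
Qed.

Lemma mean_dirac (x : 'rV[R]_d) : mean [:: (1, x)] = x.
Proof. by rewrite /mean big_seq1 scale1r. Qed.

Lemma mean_fair_coin (x y : 'rV[R]_d) :
  mean [:: (1 / 2, x); (1 / 2, y)] = (1 / 2) *: (x + y).
Proof. by rewrite /mean !big_cons big_nil addr0 scalerDr. Qed.

End FiniteDistributions.

Section Counterexample.
Variable R : realType.

Definition fair_coin : fdist R 1 :=
  [:: (1 / 2, const_mx 0); (1 / 2, const_mx 4)].
Definition sure_three : fdist R 1 := [:: (1, const_mx 3)].

Definition coin_or_sure (i : 'I_2) : fdist R 1 :=
  if i == ord0 then fair_coin else sure_three.

Lemma is_dist_coin_or_sure i : is_dist (coin_or_sure i).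
Proof.
rewrite /coin_or_sure; case: ifP => _.
  exact: is_dist_fair_coin.
exact: is_dist_dirac.
Qed.

Lemma succ_p_mean_sure_coin : succ_p (mean sure_three) (mean fair_coin).
Proof.
rewrite mean_dirac mean_fair_coin.
have -> : (1 / 2) *: (const_mx 0 + const_mx 4) = const_mx 2 :> 'rV[R]_1.
  by apply/rowP => i; rewrite !mxE; lra.
by apply: succ_p_const; lra.
Qed.

Lemma cdf_dominance_weights_only_coin (lam : 'I_2 -> R) :
  in_simplex lam ->
  mix_cdf lam coin_or_sure (const_mx 3) <= cdf fair_coin (const_mx 3) ->
  forall i, i != ord0 -> lam i = 0.
Proof.
move=> [lam_ge0 sum_lam] cdf_le [[|[|//]] lt_i2] // _.
have -> : Ordinal lt_i2 = lift ord0 ord0 by apply: val_inj.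
rewrite big_ord_recl big_ord1 in sum_lam.
move: cdf_le; rewrite /mix_cdf /cdf big_ord_recl big_ord1 /=.
rewrite !big_cons big_nil /= !le_p_const ler0n !ler_nat /=.
move: (lam_ge0 ord0) (lam_ge0 (lift ord0 ord0)); lra.
Qed.

End Counterexample.

Theorem mainTheorem14 (R : realType) :
  exists (d n : nat) (Pi : 'I_n -> fdist R d),
    (forall i, is_dist (Pi i)) /\
    exists k : 'I_n, inCDUS Pi k /\ ~ inPF Pi k.
Proof.
exists 1%N, 2%N, (@coin_or_sure R); split; first exact: is_dist_coin_or_sure.
exists ord0; split.
  move=> [lam [lamS [cdf_le marginal_dom]]].
  have lam_coin := cdf_dominance_weights_only_coin lamS (cdf_le _).
  exact: (not_mix_succ_d_self lamS lam_coin (conj cdf_le marginal_dom)).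
by apply; exists ord_max; exact: succ_p_mean_sure_coin.
Qed.
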